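(* The set of $\mathcal{P}$-positions of the Wythoff variant with terminal set $T_5 = \{(x,y) \in \mathbb{Z}_{\ge 0}^2 : x+y \le 5\}$ is exactly $P_5 = T_5 \cup \{(b_n,a_n) : n \in \mathbb{N}\} \cup \{(a_n,b_n) : n \in \mathbb{N}\}$.
   Context: Positions are pairs $(x,y) \in \mathbb{Z}_{\ge 0}^2$. In the Wythoff variant with terminal set $T_5$, from a position $(x,y) \notin T_5$ a move goes to any position in $\{(u,y) : 0 \le u < x\} \cup \{(x,v) : 0 \le v < y\} \cup \{(x-t,y-t) : 1 \le t \le \min(x,y)\}$; positions in $T_5$ have no moves. Players alternate; a player with no move loses (the player who moves into $T_5$ wins). A $\mathcal{P}$-position is one from which the previous player wins with optimal play; equivalently a position is $\mathcal{P}$ iff every move from it leads to a non-$\mathcal{P}$ position. Sequences: Fibonacci numbers $F_1 = F_2 = 1$, $F_{i+2} = F_{i+1} + F_i$. Let $\sigma$ be the substitution on finite sequences over $\{1,2\}$ replacing each entry $1$ by $2$ and each entry $2$ by $2,1$. Let $C_{1,1} = (1)$, $C_{i+1,1} = \sigma(C_{i,1})$. For $i \in \mathbb{N}$ let $C_i$ be the concatenation of five copies of $C_{i,1}$. Let $(c_n)_{n \in \mathbb{N}}$ be the concatenation of $C_1, C_2, C_3, \dots$ in order, $d_n = c_n + 1$, $a_1 = 6$, $a_n = 6 + \sum_{i=1}^{n-1} c_i$, $b_1 = 12$, $b_n = 12 + \sum_{i=1}^{n-1} d_i$. *)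

From mathcomp Require Import all_boot.
Set Implicit Arguments. Unset Strict Implicit. Unset Printing Implicit Defensive.

Definition inT5 (x y : nat) : bool := x + y <= 5.

(* P-positions, computed by recursion on a fuel bounding x + y:
   a position is P iff every move leads to a non-P position
   (positions in T_5 have no moves, hence are P). *)
Fixpoint isP_fuel (k x y : nat) {struct k} : bool :=
  match k with
  | 0 => true
  | k'.+1 =>
      inT5 x y ||
      [&& all (fun u => ~~ isP_fuel k' u y) (iota 0 x),
          all (fun v => ~~ isP_fuel k' x v) (iota 0 y)
        & all (fun t => ~~ isP_fuel k' (x - t) (y - t)) (iota 1 (minn x y))]
  end.

Definition isP (x y : nat) : bool := isP_fuel (x + y).+1 x y.

Definition sigma (s : seq nat) : seq nat :=
  flatten [seq (if e == 1 then [:: 2] else [:: 2; 1]) | e <- s].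

Definition Ci1 (i : nat) : seq nat := iter i.-1 sigma [:: 1].

Definition Ci (i : nat) : seq nat := flatten (nseq 5 (Ci1 i)).

(* c_n (n >= 1) : the n-th entry of C_1 C_2 C_3 ...  ; the prefix C_1 ... C_n
   has length >= 5n >= n, so it suffices. *)
Definition c (n : nat) : nat := nth 0 (flatten [seq Ci i | i <- iota 1 n]) n.-1.
Definition d (n : nat) : nat := c n + 1.

Definition a (n : nat) : nat := 6 + \sum_(1 <= i < n) c i.
Definition b (n : nat) : nat := 12 + \sum_(1 <= i < n) d i.

From mathcomp Require Import all_boot.
From mathcomp Require Import zify.

(* The word c = C_1 C_2 ... satisfies c = 11111 sigma(c), so the image
   sigma(c_k) of the k-th letter starts at position a_k: hence c_(a_k) = 2, and
   c_(a_k + 1) = 1 whenever c_k = 2.  By induction b_k = a_(a_k) + 1, which lies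
   strictly between a_(a_k) and a_(a_k + 1) = a_(a_k) + 2; so a and b partition
   the integers >= 6, with b_n - a_n = n + 5.  As in Wythoff's game, no move
   leads from one position of P_5 to another, while every other position
   outside T_5 has a move into P_5; so P_5 satisfies the recursion defining the
   P-positions, whose solution is unique. *)

Definition all12 (w : seq nat) : bool := all (fun e => (e == 1) || (e == 2)) w.

Lemma sigma_cat s t : sigma (s ++ t) = sigma s ++ sigma t.
Proof. by rewrite /sigma map_cat flatten_cat. Qed.

Lemma sigma_cons e s : sigma (e :: s) = sigma [:: e] ++ sigma s.
Proof. by rewrite -cat1s sigma_cat. Qed.

Lemma sigma_flatten ss : sigma (flatten ss) = flatten (map sigma ss).
Proof. by elim: ss => [|s ss IH] //=; rewrite sigma_cat IH. Qed.

Lemma nth_sigma1_0 e : nth 0 (sigma [:: e]) 0 = 2.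
Proof. by rewrite /sigma /=; case: (e == 1). Qed.

Lemma all12_sigma w : all12 (sigma w).
Proof.
elim: w => [|e w IH] //; rewrite sigma_cons /all12 all_cat; apply/andP.
by split; [rewrite /sigma /=; case: (e == 1) | exact: IH].
Qed.

Lemma size_sigma w : all12 w -> size (sigma w) = sumn w.
Proof.
elim: w => [|e w IH] //= /andP [he hw]; rewrite sigma_cons size_cat IH //.
by case/orP: he => /eqP ->.
Qed.

Lemma size_sigma_ge w : size w <= size (sigma w).
Proof.
elim: w => [|e w IH] //; rewrite sigma_cons size_cat /=.
suff: 0 < size (sigma [:: e]) by lia.
by rewrite /sigma /=; case: (e == 1).
Qed.

Lemma nth_sigma w k j : all12 w -> k < size w -> j < nth 0 w k ->
  nth 0 (sigma w) (sumn (take k w) + j) = nth 0 (sigma [:: nth 0 w k]) j.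
Proof.
move=> w12 hk hj; have wE := cat_take_drop k w; rewrite (drop_nth 0 hk) in wE.
move: w12; rewrite -{1}wE /all12 all_cat /= => /and3P [h12 hnth _].
rewrite -{1}wE sigma_cat nth_cat size_sigma // ltnNge leq_addr /= addKn.
by rewrite sigma_cons nth_cat size_sigma /= ?hnth // addn0 hj.
Qed.

Definition Cprefix (N : nat) : seq nat := flatten [seq Ci i | i <- iota 1 N].

Lemma sigma_Ci_iota m N : 0 < m ->
  sigma (flatten [seq Ci i | i <- iota m N]) = flatten [seq Ci i | i <- iota m.+1 N].
Proof.
elim: N m => [|N IH] [|m] // _ /=.
by rewrite sigma_cat IH // /Ci sigma_flatten map_nseq.
Qed.

Lemma CprefixS N : Cprefix N.+1 = nseq 5 1 ++ sigma (Cprefix N).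
Proof. by rewrite /Cprefix sigma_Ci_iota. Qed.

Lemma all12_Cprefix N : all12 (Cprefix N).
Proof.
case: N => [|N] //; rewrite CprefixS /all12 all_cat; apply/andP.
by split; last exact: all12_sigma.
Qed.

Lemma size_Cprefix N : N <= size (Cprefix N).
Proof.
elim: N => [|N IH] //; rewrite CprefixS size_cat /=.
have := size_sigma_ge (Cprefix N); lia.
Qed.

Lemma Cprefix_prefix N k : exists t, Cprefix (N + k) = Cprefix N ++ t.
Proof.
elim: N => [|N [t IH]]; first by exists (Cprefix k).
by exists (sigma t); rewrite addSn !CprefixS IH sigma_cat catA.
Qed.

Lemma cE n N : 0 < n <= N -> c n = nth 0 (Cprefix N) n.-1.
Proof.
move=> /andP [n_gt0 leNn]; rewrite -(subnKC leNn).
have [t ->] := Cprefix_prefix n (N - n).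
by rewrite /c nth_cat -/(Cprefix n) (leq_trans _ (size_Cprefix n)) ?prednK.
Qed.

Lemma c12 n : 0 < n -> c n = 1 \/ c n = 2.
Proof.
move=> n_gt0; rewrite (@cE n n); last by rewrite n_gt0 leqnn.
have hn : n.-1 < size (Cprefix n) by have := size_Cprefix n; lia.
have /allP /(_ _ (mem_nth 0 hn)) := all12_Cprefix n.
by case/orP => /eqP ->; [left|right].
Qed.

Lemma c_bounds n : 0 < n -> 1 <= c n <= 2.
Proof. by move=> /c12 [] ->. Qed.

Lemma c_small n : 0 < n <= 5 -> c n = 1.
Proof. by case: n => [|[|[|[|[|[|n]]]]]]. Qed.

(* Also at n = 0, where a 0 = a 1 and c 0 = 0 is a junk value. *)
Lemma aS n : a n.+1 = a n + c n.
Proof.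
by case: n => [|n]; rewrite /a; [rewrite !big_geq | rewrite big_nat_recr //= addnA].
Qed.

Lemma a1 : a 1 = 6.
Proof. by rewrite /a big_geq. Qed.

Lemma bS n : 0 < n -> b n.+1 = b n + d n.
Proof. by move=> n_gt0; rewrite /b big_nat_recr //= addnA. Qed.

Lemma bE n : 0 < n -> b n = a n + n + 5.
Proof.
elim: n => [|[|n] IH] // _; first by rewrite /a /b !big_geq.
by rewrite aS bS // IH // /d; lia.
Qed.

Lemma a_addn n m : 0 < n -> a n + m <= a (n + m).
Proof.
move=> n_gt0; elim: m => [|m IH]; first by rewrite !addn0.
by rewrite !addnS aS; have := c_bounds (n + m) (ltn_addr m n_gt0); lia.
Qed.

Lemma a_ge n : 0 < n -> n + 5 <= a n.
Proof. by case: n => // n _; have := a_addn 1 n isT; rewrite a1 add1n; lia. Qed.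

Lemma ltn_a n m : 0 < n -> n < m -> a n < a m.
Proof.
move=> n_gt0 ltnm; have := a_addn n (m - n) n_gt0.
by rewrite subnKC; [lia | exact: ltnW].
Qed.

Lemma leq_a n m : 0 < n -> n <= m -> a n <= a m.
Proof. by move=> n_gt0 lenm; have := a_addn n (m - n) n_gt0; rewrite subnKC //; lia. Qed.

Lemma a_inj n m : 0 < n -> 0 < m -> a n = a m -> n = m.
Proof.
move=> n_gt0 m_gt0 anm.
by case: (ltngtP n m) => // [/(ltn_a _ _ n_gt0)|/(ltn_a _ _ m_gt0)]; rewrite anm ltnn.
Qed.

Lemma a_prefix_sum k N : k <= N -> a k.+1 = 6 + sumn (take k (Cprefix N)).
Proof.
elim: k => [|k IH] hk; first by rewrite a1 take0.
have hkN : k < size (Cprefix N) by have := size_Cprefix N; lia.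
by rewrite aS (IH (ltnW hk)) (take_nth 0 hkN) sumn_rcons (@cE k.+1 N) ?hk // addnA.
Qed.

Lemma c_block k j : 0 < k -> j < c k -> c (a k + j) = nth 0 (sigma [:: c k]) j.
Proof.
case: k => [|k] // _ hj; have ckS := c_bounds k.+1 isT.
have ak_ge := a_ge k.+1 isT.
set N := a k.+1 + 2.
have hkN : k < size (Cprefix N) by have := size_Cprefix N; lia.
have ckE : c k.+1 = nth 0 (Cprefix N) k by rewrite (@cE k.+1 N) //; lia.
set s := sumn (take k (Cprefix N)).
have akE : a k.+1 = 6 + s by apply: a_prefix_sum; lia.
rewrite (@cE _ N.+1); last by lia.
rewrite CprefixS nth_cat size_nseq ltnNge akE /=.
have -> : (6 + s + j).-1 - 5 = s + j by lia.
by rewrite ckE nth_sigma ?all12_Cprefix // -ckE.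
Qed.

Lemma c_at_a k : 0 < k -> c (a k) = 2.
Proof.
move=> k_gt0; have := @c_block k 0 k_gt0; rewrite addn0 nth_sigma1_0; apply.
by have := c_bounds k k_gt0; lia.
Qed.

Lemma c_after_a k : 0 < k -> c k = 2 -> c (a k).+1 = 1.
Proof. by move=> k_gt0 ck2; rewrite -addn1 c_block // ck2. Qed.

Lemma a6 : a 6 = 11.
Proof. by rewrite (aS 5) (aS 4) (aS 3) (aS 2) (aS 1) a1 !c_small. Qed.

Lemma b_aa k : 0 < k -> b k = (a (a k)).+1.
Proof.
elim: k => [|[|k] IH] // _; first by rewrite a1 a6 /b big_geq.
have ak_gt0 : 0 < a k.+1 by have := a_ge k.+1 isT; lia.
rewrite bS // IH // /d (aS k.+1).
case: (c12 k.+1 isT) => ck; rewrite ck.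
  by rewrite [a k.+1 + 1]addn1 (aS (a k.+1)) c_at_a; lia.
by rewrite [a k.+1 + 2]addn2 (aS (a k.+1).+1) (aS (a k.+1)) c_at_a // c_after_a //; lia.
Qed.

Lemma a_aS k : 0 < k -> a (a k).+1 = a (a k) + 2.
Proof. by move=> k_gt0; rewrite aS c_at_a. Qed.

Lemma a_neq_b n m : 0 < n -> 0 < m -> a n <> b m.
Proof.
move=> n_gt0 m_gt0; rewrite b_aa //; have := a_aS m m_gt0.
case: (leqP n (a m)) => [/(leq_a _ _ n_gt0)|/(leq_a (a m).+1 _ isT)]; lia.
Qed.

Lemma a_bracket x : 6 <= x -> exists2 n, 0 < n & a n <= x < a n.+1.
Proof.
elim: x => [|x IH] // x_ge6; case: (leqP 6 x) => [/IH [n n_gt0 /andP [anx xan]]|x_lt6].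
  case: (ltnP x.+1 (a n.+1)) => xan'; first by exists n => //; lia.
  by exists n.+1 => //; have := ltn_a n.+1 n.+2 isT (ltnSn _); lia.
by exists 1 => //; rewrite (aS 1) a1; have := c_bounds 1 isT; lia.
Qed.

Lemma a_or_b x : 6 <= x ->
  (exists2 n, 0 < n & x = a n) \/ (exists2 m, 0 < m & x = b m).
Proof.
move=> /a_bracket [n n_gt0 /andP [anx]]; rewrite aS => xan.
case: (eqVneq x (a n)) => [->|x_neq]; [by left; exists n | right].
have cn2 : c n = 2 by have := c_bounds n n_gt0; lia.
have n_ge6 : 6 <= n by case: (leqP 6 n) => // n_lt6; move: cn2; rewrite c_small; lia.
have [k k_gt0 /andP [akn]] := a_bracket n n_ge6; rewrite aS => nak.
case: (eqVneq n (a k)) => [nE|n_neq]; first by exists k; rewrite // b_aa // -nE; lia.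
have ck2 : c k = 2 by have := c_bounds k k_gt0; lia.
have nE : n = (a k).+1 by lia.
by move: cn2; rewrite nE c_after_a.
Qed.

Definition no_move_into (Q : nat -> nat -> Prop) (x y : nat) : Prop :=
  [/\ forall u, u < x -> ~ Q u y,
      forall v, v < y -> ~ Q x v &
      forall t, 0 < t <= minn x y -> ~ Q (x - t) (y - t)].

Definition P_rule (Q : nat -> nat -> Prop) : Prop :=
  forall x y, Q x y <-> x + y <= 5 \/ no_move_into Q x y.

Lemma isP_fuel_rule Q k x y : P_rule Q -> x + y < k -> isP_fuel k x y <-> Q x y.
Proof.
move=> Qrule; elim: k x y => [|k IH] x y // xy_lt.
have IHk u v : u + v < x + y -> isP_fuel k u v <-> Q u v.
  by move=> uv_le; apply: IH; lia.
rewrite Qrule /= /inT5; split.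
  case/orP => [T5|/and3P [/allP hu /allP hv /allP ht]]; [by left | right; split].
  - move=> u ux; rewrite -IHk; last by lia.
    by apply/negP/hu; rewrite mem_iota.
  - move=> v vy; rewrite -IHk; last by lia.
    by apply/negP/hv; rewrite mem_iota.
  - move=> t tP; rewrite -IHk; last by lia.
    by apply/negP/ht; rewrite mem_iota; lia.
case=> [-> //|[hu hv ht]]; apply/orP; right; apply/and3P; split; apply/allP.
- move=> u; rewrite mem_iota => uP; apply/negP; rewrite IHk; last by lia.
  exact: hu.
- move=> v; rewrite mem_iota => vP; apply/negP; rewrite IHk; last by lia.
  exact: hv.
- move=> t; rewrite mem_iota => tP; apply/negP; rewrite IHk; last by lia.
  by apply: ht; lia.
Qed.

Lemma isP_rule Q : P_rule Q -> forall x y, isP x y <-> Q x y.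
Proof. by move=> Qrule x y; apply: isP_fuel_rule. Qed.

Lemma no_move_intoC Q x y : (forall u v, Q u v -> Q v u) ->
  no_move_into Q x y -> no_move_into Q y x.
Proof.
move=> QC [hu hv ht]; split=> [u /hv + /QC | v /hu + /QC | t tP /QC] //.
by apply: ht; rewrite minnC.
Qed.

Definition P5 (x y : nat) : Prop :=
  x + y <= 5 \/
  exists n, 1 <= n /\ ((x, y) = (b n, a n) \/ (x, y) = (a n, b n)).

Lemma P5C x y : P5 x y -> P5 y x.
Proof.
case=> [xy_le|[n [n_gt0 [[-> ->]|[-> ->]]]]]; first by left; rewrite addnC.
  by right; exists n; split; [|right].
by right; exists n; split; [|left].
Qed.

Lemma b_inj n m : 0 < n -> 0 < m -> b n = b m -> n = m.
Proof.
move=> n_gt0 m_gt0; rewrite !bE //.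
case: (ltngtP n m) => // [nm|mn].
  by have := ltn_a n m n_gt0 nm; lia.
by have := ltn_a m n m_gt0 mn; lia.
Qed.

Lemma P5_a n y : 0 < n -> P5 (a n) y -> y = b n.
Proof.
move=> n_gt0; have an_ge := a_ge n n_gt0.
case=> [|[m [m_gt0 [/pair_equal_spec [anm _]|/pair_equal_spec [anm ->]]]]]; first lia.
  by case: (a_neq_b n m n_gt0 m_gt0 anm).
by rewrite (a_inj n m n_gt0 m_gt0 anm).
Qed.

Lemma P5_b n y : 0 < n -> P5 (b n) y -> y = a n.
Proof.
move=> n_gt0; have an_ge := a_ge n n_gt0; have bnE := bE n n_gt0.
case=> [|[m [m_gt0 [/pair_equal_spec [bnm ->]|/pair_equal_spec [bna _]]]]]; first lia.
  by rewrite (b_inj n m n_gt0 m_gt0 bnm).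
by case: (a_neq_b m n m_gt0 n_gt0 (esym bna)).
Qed.

Lemma no_move_from_ab n : 0 < n -> no_move_into P5 (a n) (b n).
Proof.
move=> n_gt0; have an_ge := a_ge n n_gt0; have bnE := bE n n_gt0.
split=> [u u_lt /P5C /(P5_b n _ n_gt0) | v v_lt /(P5_a n _ n_gt0) | t tP]; try lia.
case=> [|[m [m_gt0 [/pair_equal_spec [bm am]|/pair_equal_spec [am bm]]]]]; try lia.
- by have := bE m m_gt0; lia.
- have bmE := bE m m_gt0.
  have mn : m = n by lia.
  by move: am; rewrite mn; lia.
Qed.

Lemma P5_no_move x y : P5 x y -> 5 < x + y -> no_move_into P5 x y.
Proof.
case=> [|[n [n_gt0 [/pair_equal_spec [-> ->]|/pair_equal_spec [-> ->]]]]] xy_gt;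
  first lia.
  exact: (no_move_intoC P5 _ _ P5C (no_move_from_ab n n_gt0)).
exact: no_move_from_ab.
Qed.

(* From (a_m, y) with a_m + 5 < y < b_m, the diagonal move to (a_j, b_j)
   with j = y - a_m - 5 < m keeps the difference y - a_m = j + 5. *)
Lemma P5_or_move x y : x <= y -> 5 < x + y -> P5 x y \/ ~ no_move_into P5 x y.
Proof.
move=> le_xy xy_gt; case: (leqP 6 x) => [x_ge6|x_lt6]; last first.
  by right; move=> [_ hv _]; apply: (hv (5 - x)); [lia | left; lia].
case: (a_or_b x x_ge6) le_xy xy_gt => [[m m_gt0 ->]|[m m_gt0 ->]] le_xy xy_gt;
  last first.
  right; move=> [_ hv _]; apply: (hv (a m)); first by have := bE m m_gt0; lia.
  by right; exists m; split; [|left].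
have bmE := bE m m_gt0.
case: (ltngtP y (b m)) => [y_lt|y_gt|->].
- right; move=> [_ _ ht]; case: (leqP (y - a m) 5) => [k_le|k_gt].
    by apply: (ht (a m)); [lia | left; lia].
  have [j yE] : exists j, y = a m + j + 5 by exists (y - a m - 5); lia.
  have j_gt0 : 0 < j by lia.
  have j_lt : j < m by lia.
  have ajm := ltn_a j m j_gt0 j_lt; have bjE := bE j j_gt0.
  apply: (ht (a m - a j)); first lia.
  by right; exists j; split; [|right; congr pair; lia].
- by right; move=> [_ hv _]; apply: (hv (b m) y_gt); right; exists m; split; [|right].
- by left; right; exists m; split; [|right].
Qed.

Lemma P5_rule : P_rule P5.
Proof.
move=> x y; case: (leqP (x + y) 5) => [xy_le|xy_gt]; first by split=> _; left.
split=> [/P5_no_move /(_ xy_gt)|[|no_move]]; [by right | lia |].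
case: (leqP x y) => [le_xy|/ltnW le_yx]; first by case: (P5_or_move x y le_xy xy_gt).
have := no_move_intoC P5 x y P5C no_move.
by case: (P5_or_move y x le_yx); [lia | move/P5C | ].
Qed.

Theorem theorem4p9 (x y : nat) :
  isP x y <->
  (x + y <= 5 \/
   exists n, 1 <= n /\ ((x, y) = (b n, a n) \/ (x, y) = (a n, b n))).
Proof. exact: isP_rule P5_rule x y. Qed.
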